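(* Let $C>0$, $\mathbf{w}^t\in\mathbb{R}^d$, let $\theta_1^t\le\dots\le\theta_{K-1}^t$ be real thresholds, $\mathbf{x}^t\in\mathbb{R}^d$ and integers $1\le y_l^t\le y_r^t\le K$; let $I_t=\{1,\dots,y_l^t-1\}\cup\{y_r^t,\dots,K-1\}$. Let $(\mathbf{w}^{t+1},\boldsymbol\theta^{t+1})$ be the PA-II update, i.e. the $(\mathbf{w},\boldsymbol\theta)$-part of the minimizer over $\mathbf{w}\in\mathbb{R}^d$, $\boldsymbol\theta\in\mathbb{R}^{K-1}$, $(\xi_i)_{i\in I_t}\in\mathbb{R}^{I_t}$ of $$\tfrac12\Vert\mathbf{w}-\mathbf{w}^t\Vert^2+\tfrac12\Vert\boldsymbol\theta-\boldsymbol\theta^t\Vert^2+C\sum_{i\in I_t}\xi_i^2$$ subject to $\mathbf{w}\cdot\mathbf{x}^t-\theta_i\ge 1-\xi_i$ for $i=1,\dots,y_l^t-1$ and $\mathbf{w}\cdot\mathbf{x}^t-\theta_i\le -1+\xi_i$ for $i=y_r^t,\dots,K-1$. Then $\theta_1^{t+1}\le\theta_2^{t+1}\le\dots\le\theta_{K-1}^{t+1}$.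
   Context: Online ranking into $K$ ordered classes with interval labels $[y_l^t,y_r^t]$: a ranker is $(\mathbf{w},\boldsymbol\theta)$, $\boldsymbol\theta=(\theta_1,\dots,\theta_{K-1})$, predicting $\min\{i:\mathbf{w}\cdot\mathbf{x}-\theta_i<0\}$ with $\theta_K=\infty$. PA-II is the passive-aggressive variant with squared slack penalty and parameter $C$ that at each trial computes the exact solution of the stated convex program. *)

From HB Require Import structures.
From mathcomp Require Import all_boot all_order all_algebra.
Set Implicit Arguments. Unset Strict Implicit. Unset Printing Implicit Defensive.
Import Order.TTheory GRing.Theory Num.Theory.
Local Open Scope ring_scope.

Definition dotv (R : realFieldType) (d : nat) (u v : 'rV[R]_d) : R :=
  \sum_(j < d) u 0 j * v 0 j.

(* Thresholds theta_1..theta_{K-1} are stored in 'rV_(K.-1); the ordinal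
   i : 'I_(K.-1) stands for the (1-based) index i.+1. *)

Definition inI (K yl yr : nat) (i : 'I_(K.-1)) : bool :=
  ((i.+1 < yl)%N || (yr <= i.+1)%N).

Definition pa2_feasible (R : realFieldType) (d K yl yr : nat) (x : 'rV[R]_d)
    (w : 'rV[R]_d) (th : 'rV[R]_(K.-1)) (xi : 'I_(K.-1) -> R) : Prop :=
  forall i : 'I_(K.-1),
    ((i.+1 < yl)%N -> dotv w x - th 0 i >= 1 - xi i) /\
    ((yr <= i.+1)%N -> dotv w x - th 0 i <= -1 + xi i).

Definition pa2_obj (R : realFieldType) (d K yl yr : nat) (C : R)
    (wt : 'rV[R]_d) (tht : 'rV[R]_(K.-1))
    (w : 'rV[R]_d) (th : 'rV[R]_(K.-1)) (xi : 'I_(K.-1) -> R) : R :=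
  2^-1 * dotv (w - wt) (w - wt) + 2^-1 * dotv (th - tht) (th - tht)
  + C * \sum_(i < K.-1 | @inI K yl yr i) xi i ^+ 2.

Definition pa2_update (R : realFieldType) (d K yl yr : nat) (C : R)
    (wt : 'rV[R]_d) (tht : 'rV[R]_(K.-1)) (x : 'rV[R]_d)
    (w' : 'rV[R]_d) (th' : 'rV[R]_(K.-1)) : Prop :=
  exists xi' : 'I_(K.-1) -> R,
    @pa2_feasible R d K yl yr x w' th' xi' /\
    forall (w : 'rV[R]_d) (th : 'rV[R]_(K.-1)) (xi : 'I_(K.-1) -> R),
      @pa2_feasible R d K yl yr x w th xi ->
      @pa2_obj R d K yl yr C wt tht w' th' xi' <= @pa2_obj R d K yl yr C wt tht w th xi.

(** Suppose the PA-II minimizer had [th' i > th' j] for some [i < j]. Replace both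
    thresholds by their mean, and, when [i] and [j] carry constraints of the same
    kind, both slacks by their mean as well. The constraints are linear in
    [(theta, xi)], so averaging keeps them; when the kinds differ, [i] can only
    carry a constraint bounding [theta_i] from above and [j] one bounding
    [theta_j] from below, so moving [th' i] down and [th' j] up keeps them. Averaging never increases a sum
    of squares, and it strictly decreases [||theta - theta^t||^2] because the
    previous thresholds are ordered the other way, [tht i <= tht j]. This
    contradicts minimality. *)

From HB Require Import structures.
From mathcomp Require Import all_boot all_order all_algebra.
From mathcomp Require Import zify ring lra.
Set Implicit Arguments. Unset Strict Implicit. Unset Printing Implicit Defensive.
Import Order.TTheory GRing.Theory Num.Theory.
Local Open Scope ring_scope.

Lemma bigD2 (V : nmodType) (I : finType) (P : pred I) (F : I -> V) (i j : I) :
  i != j -> P i -> P j ->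
  \sum_(k | P k) F k = F i + F j + \sum_(k | P k && (k != i) && (k != j)) F k.
Proof.
move=> neq_ij Pi Pj; rewrite (bigD1 i) //= (bigD1 j) /=; last by rewrite Pj eq_sym.
by rewrite addrA.
Qed.

Section PairAverage.

Variables (R : realFieldType) (I : finType).

Definition pair_avg (f : I -> R) (i j : I) : I -> R :=
  fun k => if (k == i) || (k == j) then (f i + f j) / 2 else f k.

Lemma pair_avg_in (f : I -> R) (i j k : I) :
  (k == i) || (k == j) -> pair_avg f i j k = (f i + f j) / 2.
Proof. by rewrite /pair_avg => ->. Qed.

Lemma pair_avg_out (f : I -> R) (i j k : I) :
  ~~ ((k == i) || (k == j)) -> pair_avg f i j k = f k.
Proof. by rewrite /pair_avg => /negbTE->. Qed.

Lemma sum_sqr_pair_avg (P : pred I) (f g : I -> R) (i j : I) :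
  i != j -> P i -> P j ->
  \sum_(k | P k) (f k - g k) ^+ 2 =
  \sum_(k | P k) (pair_avg f i j k - g k) ^+ 2
  + (f i - f j) * ((f i - f j) / 2 + (g j - g i)).
Proof.
move=> neq_ij Pi Pj; rewrite !(bigD2 _ neq_ij Pi Pj).
have -> : \sum_(k | P k && (k != i) && (k != j)) (pair_avg f i j k - g k) ^+ 2 =
          \sum_(k | P k && (k != i) && (k != j)) (f k - g k) ^+ 2.
  apply: eq_bigr => k /andP[/andP[_ ki] kj].
  by rewrite pair_avg_out // negb_or ki kj.
by rewrite !pair_avg_in ?eqxx ?orbT //; field.
Qed.

Lemma sum_sqr_pair_avg_le (P : pred I) (f : I -> R) (i j : I) :
  i != j -> P i -> P j ->
  \sum_(k | P k) pair_avg f i j k ^+ 2 <= \sum_(k | P k) f k ^+ 2.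
Proof.
move=> neq_ij Pi Pj.
under eq_bigr do rewrite -[pair_avg _ _ _ _]subr0.
under [leRHS]eq_bigr do rewrite -[f _]subr0.
rewrite (sum_sqr_pair_avg f (fun=> 0) neq_ij Pi Pj) lerDl subrr addr0.
by rewrite mulrA -expr2 mulr_ge0 ?sqr_ge0 ?invr_ge0 ?ler0n.
Qed.

End PairAverage.

Lemma dotv_sub_sqr (R : realFieldType) (n : nat) (u v : 'rV[R]_n) :
  dotv (u - v) (u - v) = \sum_(k < n) (u 0 k - v 0 k) ^+ 2.
Proof. by apply: eq_bigr => k _; rewrite !mxE expr2. Qed.

Section PA2Merge.

Variables (R : realFieldType) (d K yl yr : nat) (x w : 'rV[R]_d).

Definition pa2_con (k : 'I_(K.-1)) (t z : R) : Prop :=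
  ((k.+1 < yl)%N -> dotv w x - t >= 1 - z) /\ ((yr <= k.+1)%N -> dotv w x - t <= -1 + z).

Lemma pa2_con_avg (k l : 'I_(K.-1)) (t1 t2 z1 z2 : R) :
  (k.+1 < yl)%N = (l.+1 < yl)%N -> (yr <= k.+1)%N = (yr <= l.+1)%N ->
  pa2_con k t1 z1 -> pa2_con l t2 z2 -> pa2_con k ((t1 + t2) / 2) ((z1 + z2) / 2).
Proof.
rewrite /pa2_con => -> -> [lo1 up1] [lo2 up2].
by split=> h; [move: (lo1 h) (lo2 h) | move: (up1 h) (up2 h)]; lra.
Qed.

Lemma pa2_con_lower (k : 'I_(K.-1)) (t t' z : R) :
  ~~ (yr <= k.+1)%N -> t' <= t -> pa2_con k t z -> pa2_con k t' z.
Proof.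
move=> no_up le_t [lo _]; split=> h; first by move: (lo h); lra.
by rewrite h in no_up.
Qed.

Lemma pa2_con_raise (k : 'I_(K.-1)) (t t' z : R) :
  ~~ (k.+1 < yl)%N -> t <= t' -> pa2_con k t z -> pa2_con k t' z.
Proof.
move=> no_lo le_t [_ up]; split=> h; last by move: (up h); lra.
by rewrite h in no_lo.
Qed.

Variables (th : 'rV[R]_(K.-1)) (xi : 'I_(K.-1) -> R) (i j : 'I_(K.-1)).

Definition same_side : bool := (j.+1 < yl)%N || (yr <= i.+1)%N.

Definition merge_th : 'rV[R]_(K.-1) := \row_k pair_avg (th 0) i j k.

Definition merge_xi : 'I_(K.-1) -> R := if same_side then pair_avg xi i j else xi.

Hypotheses (lt_ij : (i < j)%N) (lt_th_ji : th 0 j < th 0 i).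

Lemma merge_feasible : (yl <= yr)%N ->
  pa2_feasible yl yr x w th xi -> pa2_feasible yl yr x w merge_th merge_xi.
Proof.
move=> le_yl_yr feas k; rewrite mxE.
suff : pa2_con k (pair_avg (th 0) i j k) (merge_xi k) by [].
have [k_ij | k_nij] := boolP ((k == i) || (k == j)); last first.
  by rewrite /merge_xi; case: same_side; rewrite ?pair_avg_out //; apply: feas.
rewrite pair_avg_in // /merge_xi /same_side; case: ifP => [side | /negbT].
- have [lo_ij up_ij] :
      (i.+1 < yl)%N = (j.+1 < yl)%N /\ (yr <= i.+1)%N = (yr <= j.+1)%N by lia.
  rewrite pair_avg_in //; case/orP: k_ij => /eqP->.
  + exact: pa2_con_avg lo_ij up_ij (feas i) (feas j).
  + rewrite addrC [xi i + _]addrC.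
    exact: pa2_con_avg (esym lo_ij) (esym up_ij) (feas j) (feas i).
- rewrite negb_or => /andP[no_lo_j no_up_i].
  case/orP: k_ij => /eqP->.
  + apply: (pa2_con_lower no_up_i _ (feas i)).
    by rewrite addrC; exact/ltW/(midf_lt lt_th_ji).2.
  + apply: (pa2_con_raise no_lo_j _ (feas j)).
    by rewrite addrC; exact/ltW/(midf_lt lt_th_ji).1.
Qed.

Lemma merge_obj_lt (C : R) (wt : 'rV[R]_d) (tht : 'rV[R]_(K.-1)) :
  0 <= C -> tht 0 i <= tht 0 j ->
  pa2_obj yl yr C wt tht w merge_th merge_xi < pa2_obj yl yr C wt tht w th xi.
Proof.
move=> C_ge0 le_tht_ij.
have neq_ij : i != j by rewrite -(inj_eq val_inj) /= ltn_eqF.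
rewrite /pa2_obj ltr_leD //.
  rewrite ltrD2l ltr_pM2l ?invr_gt0 ?ltr0n // !dotv_sub_sqr.
  under eq_bigr do rewrite mxE.
  rewrite (sum_sqr_pair_avg (th 0) (tht 0) neq_ij) // ltrDl.
  have gap_gt0 : 0 < th 0 i - th 0 j by rewrite subr_gt0.
  by rewrite mulr_gt0 // ltr_wpDr ?subr_ge0 // divr_gt0 ?ltr0n.
rewrite ler_wpM2l // /merge_xi /same_side; case: ifP => // side.
by apply: sum_sqr_pair_avg_le neq_ij _ _; rewrite /inI; lia.
Qed.

End PA2Merge.

Theorem theorem3 (R : realFieldType) (d K yl yr : nat) (C : R)
    (wt : 'rV[R]_d) (tht : 'rV[R]_(K.-1)) (x : 'rV[R]_d)
    (w' : 'rV[R]_d) (th' : 'rV[R]_(K.-1)) :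
  0 < C ->
  (1 <= yl)%N -> (yl <= yr)%N -> (yr <= K)%N ->
  (forall i j : 'I_(K.-1), (i <= j)%N -> tht 0 i <= tht 0 j) ->
  @pa2_update R d K yl yr C wt tht x w' th' ->
  forall i j : 'I_(K.-1), (i <= j)%N -> th' 0 i <= th' 0 j.
Proof.
move=> C_gt0 _ le_yl_yr _ tht_mono [xi' [feas' opt]] i j le_ij.
rewrite leNgt; apply/negP => lt_th_ji.
have lt_ij : (i < j)%N.
  rewrite ltn_neqAle le_ij andbT.
  by apply: contraTneq lt_th_ji => /val_inj->; rewrite ltxx.
have := opt _ _ _ (merge_feasible lt_ij lt_th_ji le_yl_yr feas').
by rewrite leNgt merge_obj_lt ?tht_mono ?ltW.
Qed.
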